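(* Let $A$ be a commutative ring. The graph $\Gamma(A)$ contains $4$-cliques if and only if the set $\{u\in A^\times\mid 1-u\in A^\times\}$ is non-empty.
   Context: A unimodular row over $A$ is $(a,b)\in A^2$ with $aA+bA=A$. $\Gamma(A)$ is the graph whose vertices are classes of unimodular rows modulo multiplication by units, with $\{[u],[v]\}$ an edge iff the matrix with rows $u,v$ lies in $\mathrm{GL}_2(A)$. A $4$-clique is a set of four distinct pairwise adjacent vertices. *)

From HB Require Import structures.
From mathcomp Require Import all_boot all_order all_algebra.
Set Implicit Arguments. Unset Strict Implicit. Unset Printing Implicit Defensive.
Import GRing.Theory.
Local Open Scope ring_scope.

Definition is_unit (A : comNzRingType) (a : A) : Prop := exists b : A, a * b = 1.

Definition unimodular (A : comNzRingType) (u : 'rV[A]_2) : Prop :=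
  exists x y : A, u 0 0 * x + u 0 1 * y = 1.

(* Two rows define the same vertex of Gamma(A): equal up to multiplication by a unit. *)
Definition same_class (A : comNzRingType) (u v : 'rV[A]_2) : Prop :=
  exists c : A, is_unit c /\ v = c *: u.

Definition mx_rows (A : comNzRingType) (u v : 'rV[A]_2) : 'M[A]_2 :=
  \matrix_(i < 2, j < 2) (if i == 0 then u 0 j else v 0 j).

Definition inGL2 (A : comNzRingType) (M : 'M[A]_2) : Prop :=
  exists N : 'M[A]_2, M *m N = 1%:M /\ N *m M = 1%:M.

(* Edge relation of Gamma(A), on representatives (independent of the representatives). *)
Definition adjacent (A : comNzRingType) (u v : 'rV[A]_2) : Prop :=
  inGL2 (mx_rows u v).

Definition has_4clique (A : comNzRingType) : Prop :=
  exists f : 'I_4 -> 'rV[A]_2,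
    (forall i, unimodular (f i)) /\
    (forall i j, i != j -> ~ same_class (f i) (f j) /\ adjacent (f i) (f j)).

From mathcomp Require Import all_boot all_order all_algebra.
From mathcomp Require Import ring.
Local Open Scope ring_scope.
Import GRing.Theory.
Set Implicit Arguments. Unset Strict Implicit. Unset Printing Implicit Defensive.

(* Two rows are adjacent iff their 2x2 determinant [xy] is a unit.  For the
   rows x, y, z, w of a 4-clique the Pluecker relation
     [xy][zw] - [xz][yw] + [xw][yz] = 0
   exhibits units p, q, r with p + r = q, and then u = p/q and 1 - u = r/q
   are both units.  Conversely, if u and 1 - u are units, the rows (1,0),
   (0,1), (1,1), (1,u) have pairwise determinants 1, 1, u, -1, -1, u - 1, so
   they form a 4-clique (adjacency already forces unimodularity and distinct
   classes). *)

Section Gamma.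

Variable A : comNzRingType.
Implicit Types (a b p q r : A) (u v w x y z : 'rV[A]_2).

Lemma is_unit1 : is_unit (1 : A).
Proof. by exists 1; rewrite mulr1. Qed.

Lemma is_unitM a b : is_unit a -> is_unit b -> is_unit (a * b).
Proof.
move=> [a' aa'] [b' bb']; exists (a' * b').
by rewrite mulrACA aa' bb' mulr1.
Qed.

Lemma is_unitN a : is_unit a -> is_unit (- a).
Proof. by move=> [a' aa']; exists (- a'); rewrite mulrNN. Qed.

Lemma is_unit_inv a a' : a * a' = 1 -> is_unit a'.
Proof. by move=> aa'; exists a; rewrite mulrC. Qed.

Lemma exceptional_unit_of_sum p q r :
  p - q + r = 0 -> is_unit p -> is_unit q -> is_unit r ->
  exists u : A, is_unit u /\ is_unit (1 - u).
Proof.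
move=> pqr0 Up [q' qq'] Ur; have Uq' := is_unit_inv qq'.
exists (p * q'); split; first exact: is_unitM.
have -> : 1 - p * q' = r * q' - (p - q + r) * q' by rewrite -qq'; ring.
by rewrite pqr0 mul0r subr0; apply: is_unitM.
Qed.

Definition det2 u v : A := u 0 0 * v 0 1 - u 0 1 * v 0 0.

Lemma det_mx_rows u v : \det (mx_rows u v) = det2 u v.
Proof.
have lift01 (i : 'I_1) : lift ord0 i = 1 :> 'I_2 by rewrite (ord1 i); apply: val_inj.
have lift10 (i : 'I_1) : lift 1 i = 0 :> 'I_2 by rewrite (ord1 i); apply: val_inj.
rewrite (expand_det_row _ ord0) !big_ord_recl big_ord0 /cofactor !det_mx11 !mxE /=.
by rewrite !lift01 lift10 /bump /= expr0 expr1 /det2; ring.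
Qed.

Lemma inGL2P (M : 'M[A]_2) : inGL2 M <-> is_unit (\det M).
Proof.
split=> [[N [MN _]] | [d Md]].
  by exists (\det N); rewrite -det_mulmx MN det1.
exists (d *: \adj M); rewrite -scalemxAr -scalemxAl mul_mx_adj mul_adj_mx.
by rewrite scale_scalar_mx mulrC Md.
Qed.

Lemma adjacentP u v : adjacent u v <-> is_unit (det2 u v).
Proof. by rewrite /adjacent inGL2P det_mx_rows. Qed.

Lemma adjacent_sym u v : adjacent u v -> adjacent v u.
Proof.
rewrite !adjacentP => /is_unitN.
by have -> : - det2 u v = det2 v u by rewrite /det2; ring.
Qed.

Lemma adjacent_unimodular u v : adjacent u v -> unimodular u.
Proof.
move=> /adjacentP [d uvd]; exists (v 0 1 * d), (- v 0 0 * d).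
by rewrite -uvd /det2; ring.
Qed.

Lemma adjacent_not_same_class u v : adjacent u v -> ~ same_class u v.
Proof.
move=> /adjacentP [d uvd] [c [_ def_v]].
have uv0 : det2 u v = 0 by rewrite def_v /det2 !mxE; ring.
by move: uvd; rewrite uv0 mul0r => /eqP; rewrite eq_sym oner_eq0.
Qed.

Lemma det2_pluecker x y z w :
  det2 x y * det2 z w - det2 x z * det2 y w + det2 x w * det2 y z = 0.
Proof. by rewrite /det2; ring. Qed.

Lemma exceptional_unit_of_4clique :
  has_4clique A -> exists u : A, is_unit u /\ is_unit (1 - u).
Proof.
move=> [f [_ clique_f]].
have U (i j : 'I_4) : i != j -> is_unit (det2 (f i) (f j)).
  by move=> ne_ij; apply/adjacentP; case: (clique_f i j ne_ij).
apply: (exceptional_unit_of_sum (det2_pluecker (f 0) (f 1) (f 2) (f 3))).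
all: by apply: is_unitM; apply: U.
Qed.

Lemma has_4clique_of_adjacent (f : 'I_4 -> 'rV[A]_2) :
  (forall i j, i != j -> adjacent (f i) (f j)) -> has_4clique A.
Proof.
move=> adj_f; exists f; split=> [i | i j ne_ij].
  have [j ne_ij] : exists j : 'I_4, i != j.
    by exists (if i == 0 then 1 else 0); case: (i =P 0) => [-> | /eqP].
  exact: adjacent_unimodular (adj_f i j ne_ij).
by split; [apply: adjacent_not_same_class|]; apply: adj_f.
Qed.

Definition row2 a b : 'rV[A]_2 := \row_j (if j == 0 then a else b).

Lemma det2_row2 a b p q : det2 (row2 a b) (row2 p q) = a * q - b * p.
Proof. by rewrite /det2 !mxE. Qed.

Lemma has_4clique_of_exceptional_unit a :
  is_unit a -> is_unit (1 - a) -> has_4clique A.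
Proof.
move=> Ua U1a.
apply: (@has_4clique_of_adjacent
          (fun i => [:: row2 1 0; row2 0 1; row2 1 1; row2 1 a]`_i)) => i j.
wlog lt_ij : i j / (i < j)%N => [hw ne_ij|_].
  case: (ltngtP i j) => [lt_ij | lt_ji | /val_inj eq_ij].
  - exact: hw.
  - by apply: adjacent_sym; apply: hw; rewrite // eq_sym.
  - by rewrite eq_ij eqxx in ne_ij.
apply/adjacentP.
case: i j lt_ij => [[|[|[|[|i]]]] Hi] // [[|[|[|[|j]]]] Hj] //= _.
all: rewrite det2_row2 ?mul0r ?mul1r ?subr0 ?sub0r.
- exact: is_unit1.
- exact: is_unit1.
- exact: Ua.
- exact/is_unitN/is_unit1.
- exact/is_unitN/is_unit1.
- by rewrite -opprB; apply: is_unitN.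
Qed.

End Gamma.

Theorem lemma2p9 (A : comNzRingType) :
  has_4clique A <-> exists u : A, is_unit u /\ is_unit (1 - u).
Proof.
split; first exact: exceptional_unit_of_4clique.
by move=> [u [Uu U1u]]; exact: has_4clique_of_exceptional_unit Uu U1u.
Qed.
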